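(* $\mathrm{add}^{*}(\mathcal{S}pl)=\mathrm{non}^{*}(\mathcal{S}pl)=\omega$. In particular, $\mathcal{S}pl$ is not a $P$-ideal.
   Context: For an infinite $A\subseteq\omega$, let $S(A)$ be the set of all $\sigma\in2^{<\omega}$ such that $\sigma$ is constant on $A\cap\mathrm{dom}(\sigma)$. The splitting ideal $\mathcal{S}pl$ is the ideal on $2^{<\omega}$ generated by the sets $S(A)$, $A\in[\omega]^{\omega}$. For an ideal $\mathcal{J}$ on a countable set $X$: $\mathrm{add}^*(\mathcal{J})=\min\{|\mathcal{F}|:\mathcal{F}\subseteq\mathcal{J}$ and for every $Y\in\mathcal{J}$ there is $F\in\mathcal{F}$ with $F\not\subseteq^{*}Y\}$; $\mathrm{non}^*(\mathcal{J})=\min\{|\mathcal{F}|:\mathcal{F}\subseteq[X]^{\omega}$ and for every $Y\in\mathcal{J}$ there is $F\in\mathcal{F}$ with $F\cap Y$ finite$\}$. A $P$-ideal is an ideal $\mathcal{J}$ such that for every countable $\{A_n\}\subseteq\mathcal{J}$ there is $B\in\mathcal{J}$ with $A_n\subseteq^* B$ for all $n$. *)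

From HB Require Import structures.
From mathcomp Require Import all_boot.
From mathcomp Require Import boolp classical_sets cardinality.
Set Implicit Arguments. Unset Strict Implicit. Unset Printing Implicit Defensive.
Local Open Scope classical_set_scope.
Local Open Scope card_scope.

(* 2^{<omega} is represented by finite bit sequences [seq bool];
   dom(sigma) = {0, ..., size sigma - 1}. *)

Definition const_on (A : set nat) (s : seq bool) : Prop :=
  forall i j, A i -> A j -> (i < size s)%N -> (j < size s)%N ->
    nth false s i = nth false s j.

Definition S_set (A : set nat) : set (seq bool) := [set s | const_on A s].

(* The splitting ideal: the ideal generated by the S(A), A infinite, i.e.
   all subsets of finite unions of such generators. *)
Definition Spl : set (set (seq bool)) :=
  [set Y | exists (n : nat) (As : nat -> set nat),
     (forall i, (i < n)%N -> infinite_set (As i)) /\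
     Y `<=` \bigcup_(i in [set k | (k < n)%N]) S_set (As i)].

Definition almost_sub (X : Type) (A B : set X) : Prop := finite_set (A `\` B).

Definition add_star_family (X : Type) (J : set (set X)) (F : set (set X)) : Prop :=
  F `<=` J /\ forall Y, J Y -> exists2 A, F A & ~ almost_sub A Y.

Definition non_star_family (X : Type) (J : set (set X)) (F : set (set X)) : Prop :=
  (forall A, F A -> infinite_set A) /\
  forall Y, J Y -> exists2 A, F A & finite_set (A `&` Y).

Definition min_card_is_omega (X : Type) (W : set (set X) -> Prop) : Prop :=
  (exists F, W F /\ F #= [set: nat]) /\ (forall F, W F -> [set: nat] #<= F).

Definition add_star_eq_omega (X : Type) (J : set (set X)) : Prop :=
  min_card_is_omega (add_star_family J).

Definition non_star_eq_omega (X : Type) (J : set (set X)) : Prop :=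
  min_card_is_omega (non_star_family J).

Definition P_ideal (X : Type) (J : set (set X)) : Prop :=
  forall A : nat -> set X, (forall n, J (A n)) ->
    exists2 B, J B & forall n, almost_sub (A n) B.

From mathcomp Require Import all_boot.
From mathcomp Require Import boolp classical_sets cardinality.
From mathcomp Require Import zify.
Set Implicit Arguments. Unset Strict Implicit. Unset Printing Implicit Defensive.
Local Open Scope classical_set_scope.
Local Open Scope card_scope.

(* The sets [OneZero n] of the words 1^n 0^j (j in omega) lie in Spl, and every
   Y in Spl, being covered by finitely many S(A_i), meets some OneZero n in a
   finite set: take n beyond an element of each A_i, so that 1^n 0^j is not
   constant on any A_i as soon as its domain reaches an element of A_i above n.
   This countable family witnesses add^* and non^* and refutes the P-ideal
   property.  Conversely, finite families cannot witness either cardinal: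
   Spl is closed under finite unions, and every infinite X has an infinite B
   with X `&` S(B) infinite, obtained by a fusion argument that fixes the
   letters of infinitely many words of X at a sparse set of positions. *)

Lemma infinite_image_inj T U (A : set T) (f : T -> U) :
  {in A &, injective f} -> infinite_set A -> infinite_set (f @` A).
Proof. by move=> /inj_card_eq/card_eqPle[_ AfA] Ainf /(card_le_finite AfA). Qed.

Lemma infinite_range_inj T (f : nat -> T) : injective f -> infinite_set (range f).
Proof. by move=> f_inj; apply: infinite_image_inj infinite_nat => x y _ _ /f_inj. Qed.

Lemma infinite_fiber_bool T (Z : set T) (f : T -> bool) :
  infinite_set Z -> exists b, infinite_set (Z `&` f @^-1` [set b]).
Proof.
move=> Zinf; apply: contrapT => /forallNP fin_fibers; apply: Zinf.
have -> : Z = Z `&` f @^-1` [set true] `|` Z `&` f @^-1` [set false].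
  by rewrite -setIUr; apply/esym/setIidl => t _ /=; case: (f t); [left|right].
by rewrite finite_setU; split; apply: contrapT; apply: fin_fibers.
Qed.

Lemma not_almost_sub_finite_setI T (A Y : set T) :
  infinite_set A -> finite_set (A `&` Y) -> ~ almost_sub A Y.
Proof. by move=> Ainf AYfin ADfin; apply: Ainf; rewrite -(setUIDK A Y) finite_setU. Qed.

Lemma dependent_choice T (P : T -> Prop) (R : T -> T -> Prop) x0 :
  P x0 -> (forall x, P x -> exists y, P y /\ R x y) ->
  exists u : nat -> T, forall j, P (u j) /\ R (u j) (u j.+1).
Proof.
move=> Px0 PR; have /choice [f Pf] : forall x, exists y, P x -> P y /\ R x y.
  move=> x; have [/PR [y PRy]|nPx] := pselect (P x); first by exists y.
  by exists x.
have Pu j : P (iter j f x0) by elim: j => //= j /Pf[].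
by exists (fun j => iter j f x0) => j; split; [exact: Pu | exact: (Pf _ (Pu j)).2].
Qed.

Lemma finite_seq_size_le L : finite_set [set s : seq bool | size s <= L].
Proof.
elim: L => [|L IH]; first by apply: (sub_finite_set _ (finite_set1 [::])) => -[].
apply: (@sub_finite_set _ _ ([set [::]] `|` cons true @` [set s | size s <= L]
  `|` cons false @` [set s | size s <= L])).
  by case=> [|[] s] /= h; [left; left|left; right; exists s|right; exists s].
by rewrite !finite_setU; do !split; exact: finite_set1 || exact: finite_image.
Qed.

Lemma refine_infinite_at (Z : set (seq bool)) L : infinite_set Z ->
  exists Z' s', [/\ Z' `<=` Z, infinite_set Z', Z' s' &
    forall t, Z' t -> L < size t /\ nth false t L = nth false s' L].
Proof.
move=> Zinf; have Zlong := infinite_setD Zinf (finite_seq_size_le L).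
have [b Zb] := infinite_fiber_bool (fun t => nth false t L) Zlong.
have [s' Zs'] := infinite_setN0 Zb.
exists ((Z `\` [set s | size s <= L]) `&` (fun t => nth false t L) @^-1` [set b]), s'.
split => //; first by move=> t [[]].
by move=> t [[_ /negP]]; rewrite -ltnNge (proj2 Zs').
Qed.

Section RefiningChain.

Variables (Z : nat -> set (seq bool)) (s : nat -> seq bool).
Hypothesis Z_s : forall j, Z j (s j).
Hypothesis Z_decr : forall j, Z j.+1 `<=` Z j.
Hypothesis Z_refine : forall j t, Z j.+1 t ->
  size (s j) < size t /\ nth false t (size (s j)) = nth false (s j.+1) (size (s j)).

Lemma chain_size_lt : {homo (fun j => size (s j)) : i j / i < j}.
Proof.
apply: homo_ltn => [? ? ?|j]; first exact: ltn_trans.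
exact: (Z_refine (Z_s j.+1)).1.
Qed.

Lemma chain_size_leE : {mono (fun j => size (s j)) : i k / i <= k}.
Proof. exact: leq_mono chain_size_lt. Qed.

Lemma chain_size_ltE i k : (size (s i) < size (s k)) = (i < k).
Proof. by rewrite !ltnNge chain_size_leE. Qed.

Lemma chain_size_inj : injective (fun j => size (s j)).
Proof. exact: incn_inj chain_size_leE. Qed.

Lemma chain_inj : injective s.
Proof. by move=> i k /(congr1 size)/chain_size_inj. Qed.

Lemma chain_sub i k : i <= k -> Z k `<=` Z i.
Proof.
move=> /subnK <-; elim: (k - i) => [|n IH] //.
by rewrite addSn; apply: subset_trans IH.
Qed.

Lemma chain_nth i k : i < k ->
  nth false (s k) (size (s i)) = nth false (s i.+1) (size (s i)).
Proof. by move=> ik; exact: (Z_refine (chain_sub ik (Z_s k))).2. Qed.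

(* For i < k the word s k has the letter [color i] at position size (s i), while
   for k <= i that position lies outside s k: hence every s k is constant on the
   positions of a single color. *)
Lemma chain_S_set : exists2 B, infinite_set B & range s `<=` S_set B.
Proof.
pose color j := nth false (s j.+1) (size (s j)).
have [b Jinf] := infinite_fiber_bool color infinite_nat.
exists ((fun j => size (s j)) @` (setT `&` color @^-1` [set b])).
  by apply: infinite_image_inj Jinf => i k _ _ /chain_size_inj.
move=> _ [k _ <-] x y [i [_ /= ib] <-] [i' [_ /= i'b] <-].
rewrite !chain_size_ltE => ik i'k.
by rewrite !chain_nth // -/(color i) -/(color i') ib i'b.
Qed.

End RefiningChain.

Lemma infinite_setI_S_set (X : set (seq bool)) : infinite_set X ->
  exists2 B, infinite_set B & infinite_set (X `&` S_set B).
Proof.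
move=> Xinf; have [s0 Xs0] := infinite_setN0 Xinf.
pose P (q : set (seq bool) * seq bool) := [/\ q.1 `<=` X, infinite_set q.1 & q.1 q.2].
pose R (q q' : set (seq bool) * seq bool) := q'.1 `<=` q.1 /\ forall t, q'.1 t ->
  size q.2 < size t /\ nth false t (size q.2) = nth false q'.2 (size q.2).
have [u Pu] : exists u, forall j, P (u j) /\ R (u j) (u j.+1).
  apply: (@dependent_choice _ P R (X, s0)) => [|[Z0 t0] [/= Z0X Z0inf _]]; first by split.
  have [Z' [s' [Z'Z0 Z'inf Z's' Z'nth]]] := refine_infinite_at (size t0) Z0inf.
  by exists (Z', s'); do !split => //; apply: subset_trans Z0X.
pose Z j := (u j).1; pose s j := (u j).2.
have ZX j : Z j `<=` X by case: (Pu j) => -[].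
have Zs j : Z j (s j) by case: (Pu j) => -[].
have Zdecr j : Z j.+1 `<=` Z j by case: (Pu j) => _ [].
have Zrefine j := (Pu j).2.2.
have [B Binf sB] := chain_S_set Zs Zdecr Zrefine.
exists B => //; apply: (@sub_infinite_set _ (range s)).
  by move=> _ [j _ <-]; split; [exact: ZX | exact: sB].
exact/infinite_range_inj/(chain_inj Zs).
Qed.

Definition onezero n j : seq bool := nseq n true ++ nseq j false.

Definition OneZero n : set (seq bool) := range (onezero n).

Lemma size_onezero n j : size (onezero n j) = n + j.
Proof. by rewrite size_cat !size_nseq. Qed.

Lemma nth_onezero n j x : nth false (onezero n j) x = (x < n).
Proof.
rewrite nth_cat size_nseq nth_nseq; case: ltnP => // _.
by rewrite nth_nseq if_same.
Qed.

Lemma onezero_inj n : injective (onezero n).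
Proof. by move=> j k /(congr1 size); rewrite !size_onezero => /addnI. Qed.

Lemma infinite_OneZero n : infinite_set (OneZero n).
Proof. exact/infinite_range_inj/onezero_inj. Qed.

Lemma OneZero_inj : injective OneZero.
Proof.
move=> n m Enm.
have [j _ /(congr1 size)] : OneZero n (onezero m 0) by rewrite Enm; exists 0.
have [k _ /(congr1 size)] : OneZero m (onezero n 0) by rewrite -Enm; exists 0.
by rewrite !size_onezero; lia.
Qed.

Lemma OneZero_sub_S_set n : OneZero n `<=` S_set [set x | n <= x].
Proof. by move=> _ [j _ <-] x y /= nx ny _ _; rewrite !nth_onezero !ltnNge nx ny. Qed.

Lemma finite_setI_OneZero_S_set (A : set nat) n :
  (exists2 a, A a & a < n) -> infinite_set A -> finite_set (OneZero n `&` S_set A).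
Proof.
move=> [a Aa an] Ainf.
have [c [Ac /negP]] := infinite_setN0 (infinite_setD Ainf (finite_II n)).
rewrite -leqNgt => nc.
apply: (sub_finite_set _ (finite_image (onezero n) (finite_II c.+1))).
move=> _ [[j _ <-] const]; exists j => //=; rewrite ltnS leqNgt; apply/negP => cj.
have := const a c Aa Ac; rewrite !size_onezero !nth_onezero an (leq_gtF nc).
by move=> /(_ ltac:(lia) ltac:(lia)).
Qed.

Lemma bounded_witnesses (A : nat -> set nat) k : (forall i, i < k -> A i !=set0) ->
  exists n, forall i, i < k -> exists2 a, A i a & a < n.
Proof.
elim: k => [|k IH] A0; first by exists 0.
have [n An] := IH (fun i ik => A0 i (ltnW ik)).
have [a Aa] := A0 k (ltnSn k).
exists (maxn n a.+1) => i; rewrite ltnS leq_eqVlt => /orP[/eqP->|ik].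
  by exists a; rewrite // leq_max ltnSn orbT.
by have [b Ab bn] := An i ik; exists b; rewrite // leq_max bn.
Qed.

Lemma Spl_finite_setI_OneZero Y : Spl Y -> exists n, finite_set (OneZero n `&` Y).
Proof.
move=> [k [As [Ainf YS]]].
have [n An] := bounded_witnesses (fun i ik => infinite_setN0 (Ainf i ik)).
exists n; apply: sub_finite_set (bigcup_finite (finite_II k)
  (fun i ik => finite_setI_OneZero_S_set (An i ik) (Ainf i ik))).
by move=> t [Ot /YS [i ik St]]; exists i.
Qed.

Lemma Spl_S_set A : infinite_set A -> Spl (S_set A).
Proof. by move=> Ainf; exists 1, (fun=> A); split => // t St; exists 0. Qed.

Lemma Spl_sub A B : A `<=` B -> Spl B -> Spl A.
Proof.
by move=> AB [n [As [Ainf BS]]]; exists n, As; split => //; apply: subset_trans BS.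
Qed.

Lemma Spl_OneZero n : Spl (OneZero n).
Proof.
apply: Spl_sub (@OneZero_sub_S_set n) (Spl_S_set _).
apply: sub_infinite_set (infinite_setD infinite_nat (finite_II n)) => x [_ /negP].
by rewrite -leqNgt.
Qed.

Lemma Spl_setU A B : Spl A -> Spl B -> Spl (A `|` B).
Proof.
move=> [n1 [As1 [Ainf1 AS1]]] [n2 [As2 [Ainf2 BS2]]].
exists (n1 + n2), (fun i => if i < n1 then As1 i else As2 (i - n1)); split.
  by move=> i ilt; case: ifP => i_n1; [apply: Ainf1 | apply: Ainf2; lia].
move=> t [/AS1 [i /= ilt St]|/BS2 [i /= ilt St]].
  by exists i; rewrite /= ?ilt //; lia.
exists (n1 + i); first by rewrite /=; lia.
by rewrite /= ifF ?addKn //; lia.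
Qed.

Lemma Spl_bigcup_II m (F : nat -> set (seq bool)) :
  (forall i, i < m -> Spl (F i)) -> Spl (\bigcup_(i in `I_m) F i).
Proof.
elim: m => [|m IH] FSpl.
  by rewrite II0 bigcup_set0; apply: Spl_sub (Spl_S_set infinite_nat).
rewrite IIS bigcup_setU bigcup_set1; apply: Spl_setU; last exact: FSpl.
by apply: IH => i im; apply: FSpl; apply: ltnW.
Qed.

Lemma Spl_bigcup (G : set (set (seq bool))) :
  finite_set G -> G `<=` Spl -> Spl (\bigcup_(Y in G) Y).
Proof.
move=> /finite_setP[m]; rewrite card_eq_sym => /card_set_bijP[f [fG _ Gf]] GSpl.
apply: (@Spl_sub _ (\bigcup_(i in `I_m) f i)).
  by move=> t [Y /Gf [i im <-] Yt]; exists i.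
by apply: Spl_bigcup_II => i im; apply/GSpl/fG.
Qed.

Lemma add_star_family_Spl_infinite F : add_star_family Spl F -> infinite_set F.
Proof.
move=> [FSpl FY] Ffin; have [A FA] := FY _ (Spl_bigcup Ffin FSpl); apply.
rewrite /almost_sub; suff -> : A `\` \bigcup_(Y in F) Y = set0 by exact: finite_set0.
by rewrite setD_eq0; exact: bigcup_sup.
Qed.

Lemma non_star_family_Spl_infinite F : non_star_family Spl F -> infinite_set F.
Proof.
move=> [Finf FY] Ffin.
have /choice [B FB] : forall A, exists B, F A ->
    infinite_set B /\ infinite_set (A `&` S_set B).
  move=> A; have [/Finf/infinite_setI_S_set [B Binf ABinf]|nFA] := pselect (F A).
    by exists B.
  by exists set0.
have SplY : Spl (\bigcup_(Y in (S_set \o B) @` F) Y).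
  apply: Spl_bigcup => [|_ [A FA <-]]; first exact: finite_image.
  exact: Spl_S_set (FB A FA).1.
have [A FA AYfin] := FY _ SplY; apply: (FB A FA).2; apply: sub_finite_set AYfin.
by move=> t [At St]; split => //; exists (S_set (B A)) => //; exists A.
Qed.

Lemma add_star_family_OneZero : add_star_family Spl (range OneZero).
Proof.
split; first by move=> _ [n _ <-]; exact: Spl_OneZero.
move=> Y /Spl_finite_setI_OneZero [n OYfin]; exists (OneZero n); first by exists n.
exact: not_almost_sub_finite_setI (@infinite_OneZero n) OYfin.
Qed.

Lemma non_star_family_OneZero : non_star_family Spl (range OneZero).
Proof.
split; first by move=> _ [n _ <-]; exact: infinite_OneZero.
by move=> Y /Spl_finite_setI_OneZero [n OYfin]; exists (OneZero n); first exists n.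
Qed.

Lemma card_range_OneZero : range OneZero #= [set: nat].
Proof. by apply: inj_card_eq => n m _ _; apply: OneZero_inj. Qed.

Lemma Spl_not_P_ideal : ~ P_ideal Spl.
Proof.
move=> /(_ OneZero Spl_OneZero) [B /Spl_finite_setI_OneZero [n OBfin] OB].
exact: not_almost_sub_finite_setI (@infinite_OneZero n) OBfin (OB n).
Qed.

Theorem mainTheorem11 :
  add_star_eq_omega Spl /\ non_star_eq_omega Spl /\ ~ P_ideal Spl.
Proof.
split; [|split; last exact: Spl_not_P_ideal]; split.
- exists (range OneZero); split; first exact: add_star_family_OneZero.
  exact: card_range_OneZero.
- by move=> F /add_star_family_Spl_infinite/infiniteP.
- exists (range OneZero); split; first exact: non_star_family_OneZero.
  exact: card_range_OneZero.
- by move=> F /non_star_family_Spl_infinite/infiniteP.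
Qed.
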